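(* Let $n_1,n_2\ge 3$, let $\Gamma=C_{n_1}\Box C_{n_2}$ where all edges of the cycle $C_{n_1}$ have length $\ell_1>0$ and all edges of $C_{n_2}$ have length $\ell_2>0$, with $G=G_{n_1}\times G_{n_2}$ acting by the rotations. For $s\in\{0,\dots,n_1-1\}$, $t\in\{0,\dots,n_2-1\}$ put $a_s=\omega_1^s+\omega_1^{-s}=2\cos(2\pi s/n_1)$, $b_t=\omega_2^t+\omega_2^{-t}=2\cos(2\pi t/n_2)$ and $$\Sigma_{s,t}(k)=1-\tfrac12 a_s e^{ik\ell_1}-\tfrac12 b_t e^{ik\ell_2}+\tfrac12 a_s e^{ik(\ell_1+2\ell_2)}+\tfrac12 b_t e^{ik(2\ell_1+\ell_2)}-e^{2ik(\ell_1+\ell_2)}.$$ Then for every real $k\neq0$, $k^2$ is an eigenvalue of $\mathscr H_{s,t}$ if and only if $\Sigma_{s,t}(k)=0$.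
   Context: $C_n$ denotes the cycle graph on $n$ vertices $w_0,\dots,w_{n-1}$ with edges $w_jw_{j+1}$ (indices mod $n$); the cyclic group $G_n=\langle g\rangle$ acts by the rotation $g w_j=w_{j+1}$, mapping edges isometrically onto edges. The Cartesian product metric graph $\Gamma_{n_1}\Box\Gamma_{n_2}$ has vertex set $V(\Gamma_{n_1})\times V(\Gamma_{n_2})$; $(u,v)$ and $(u',v')$ are joined iff either $u=u'$ and $v\sim v'$ in $\Gamma_{n_2}$ (length of $vv'$), or $v=v'$ and $u\sim u'$ in $\Gamma_{n_1}$ (length of $uu'$). $G=G_{n_1}\times G_{n_2}$, $G_{n_i}=\langle g_i\rangle$, acts by $(g_1^\kappa,g_2^\iota)(u,v)=(g_1^\kappa u,g_2^\iota v)$, extended isometrically to edges; $(T_hf)(y)=f(hy)$ on $L^2(\Gamma)$ (functions square integrable on each edge). $\omega_i=e^{2\pi i/n_i}$; $\tau_{s,t}(g_1^\kappa,g_2^\iota)=\omega_1^{s\kappa}\omega_2^{t\iota}$; $\mathcal F_{s,t}=\{f\in L^2(\Gamma):T_hf=\overline{\tau_{s,t}(h)}f\ \forall h\in G\}$. Standard vertex conditions at a vertex $v$: continuity of $f$ at $v$ and $\sum_{e\ni v}f'|_e(v)=0$ with derivatives pointing into the edges. $\mathscr H=-d^2/dx^2$ on each edge with domain the functions that are $H^2$ on each edge and satisfy the standard conditions at all vertices. $\mathscr H_{s,t}$ is the restriction of $\mathscr H$ to $\mathcal D(\mathscr H)\cap\mathcal F_{s,t}$, a self-adjoint operator in $\mathcal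 F_{s,t}$. *)

From Stdlib Require Import Reals Arith.
From Coquelicot Require Import Coquelicot.
Open Scope R_scope.

Definition Cexpi (theta : R) : C := (cos theta, sin theta).

(* Vertices: (j1, j2) with j1 < n1, j2 < n2.
   Edges: for each vertex (j1,j2),
     - the "horizontal" edge (d = true) from (j1,j2) to ((j1+1) mod n1, j2), length l1;
     - the "vertical"   edge (d = false) from (j1,j2) to (j1, (j2+1) mod n2), length l2.
   The edge (d,j1,j2) is identified with [0, len d], coordinate 0 at (j1,j2).
   A function on Gamma is  f : bool -> nat -> nat -> R -> C, where only the
   values f d j1 j2 x with j1 < n1, j2 < n2, 0 <= x <= len d matter. *)

Definition edge_len (l1 l2 : R) (d : bool) : R := if d then l1 else l2.

Definition prev (n j : nat) : nat := ((j + n - 1) mod n)%nat.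
Definition next (n j : nat) : nat := ((j + 1) mod n)%nat.

(* f is, on every edge, a (classical, hence H^2) solution of -f'' = lam f:
   f' and f'' are its first and second derivatives (the edge functions are
   taken C^2 on all of R; every H^2 solution on [0,len] extends so). *)
Definition edge_eigen (n1 n2 : nat) (l1 l2 lam : R)
  (f f' f'' : bool -> nat -> nat -> R -> C) : Prop :=
  forall d j1 j2, (j1 < n1)%nat -> (j2 < n2)%nat ->
    (forall x, is_derive (f d j1 j2) x (f' d j1 j2 x)) /\
    (forall x, is_derive (f' d j1 j2) x (f'' d j1 j2 x)) /\
    (forall x, 0 <= x <= edge_len l1 l2 d ->
        Copp (f'' d j1 j2 x) = Cmult (RtoC lam) (f d j1 j2 x)).

(* Incident edges: horizontal (true,j1,j2) at x=0, horizontal (true,prev j1,j2) at x=l1,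
   vertical (false,j1,j2) at x=0, vertical (false,j1,prev j2) at x=l2.
   Derivatives pointing into the edges: f'(0) at a start, -f'(len) at an end. *)
Definition standard_conditions (n1 n2 : nat) (l1 l2 : R)
  (f f' : bool -> nat -> nat -> R -> C) : Prop :=
  forall j1 j2, (j1 < n1)%nat -> (j2 < n2)%nat ->
    f true (prev n1 j1) j2 l1 = f true j1 j2 0 /\
    f false j1 j2 0 = f true j1 j2 0 /\
    f false j1 (prev n2 j2) l2 = f true j1 j2 0 /\
    Cplus (Cplus (f' true j1 j2 0) (Copp (f' true (prev n1 j1) j2 l1)))
          (Cplus (f' false j1 j2 0) (Copp (f' false j1 (prev n2 j2) l2))) = RtoC 0.

Definition tau (n1 n2 s t kappa iota : nat) : C :=
  Cexpi (2 * PI * INR (s * kappa) / INR n1 + 2 * PI * INR (t * iota) / INR n2).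

(* f in F_{s,t}: T_h f = conj(tau_{s,t}(h)) f for all h in G, where
   (T_h f)(y) = f(h y) and h = (g1^kappa, g2^iota) maps the edge (d,j1,j2)
   isometrically (orientation preserved) onto the edge (d, j1+kappa, j2+iota). *)
Definition in_F (n1 n2 s t : nat) (f : bool -> nat -> nat -> R -> C) : Prop :=
  forall kappa iota d j1 j2 x, (kappa < n1)%nat -> (iota < n2)%nat ->
    (j1 < n1)%nat -> (j2 < n2)%nat ->
    f d ((j1 + kappa) mod n1)%nat ((j2 + iota) mod n2)%nat x
    = Cmult (Cconj (tau n1 n2 s t kappa iota)) (f d j1 j2 x).

Definition is_eigenvalue_Hst (n1 n2 : nat) (l1 l2 : R) (s t : nat) (lam : R) : Prop :=
  exists f f' f'' : bool -> nat -> nat -> R -> C,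
    edge_eigen n1 n2 l1 l2 lam f f' f'' /\
    standard_conditions n1 n2 l1 l2 f f' /\
    in_F n1 n2 s t f /\
    (exists d j1 j2 x, (j1 < n1)%nat /\ (j2 < n2)%nat /\
       0 <= x <= edge_len l1 l2 d /\ f d j1 j2 x <> RtoC 0).

Definition a_coef (n1 s : nat) : R := 2 * cos (2 * PI * INR s / INR n1).

Definition Sigma (n1 n2 : nat) (l1 l2 : R) (s t : nat) (k : R) : C :=
  let a := a_coef n1 s in
  let b := a_coef n2 t in
  Cplus (Cplus (Cplus (Cplus (Cplus (RtoC 1)
    (Copp (Cmult (RtoC (a / 2)) (Cexpi (k * l1)))))
    (Copp (Cmult (RtoC (b / 2)) (Cexpi (k * l2)))))
    (Cmult (RtoC (a / 2)) (Cexpi (k * (l1 + 2 * l2)))))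
    (Cmult (RtoC (b / 2)) (Cexpi (k * (2 * l1 + l2)))))
    (Copp (Cexpi (2 * k * (l1 + l2)))).

(* An eigenfunction in F_{s,t} is determined by its two edges leaving the vertex (0,0):
   T_h f = conj(tau(h)) f transports them, up to a phase, onto every other edge.  On
   these two edges -f'' = k^2 f forces A cos kx + B sin kx and A cos kx + D sin kx, with a
   common A by continuity.  The two edges entering (0,0) are their translates by g1^-1 and
   g2^-1, which carry the phases P = omega1^s and Q = omega2^t, so continuity and
   Kirchhoff at (0,0) become a 3x3 linear system in (A, B, D); the conditions at the other
   vertices then hold by symmetry.  Using P + 1/P = a_s and Q + 1/Q = b_t, the determinant
   of the system is -PQ (2 sin k(l1+l2) - a_s sin kl2 - b_t sin kl1), and Sigma_{s,t}(k)
   is the same quantity times -i e^{ik(l1+l2)}. *)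

From Stdlib Require Import Reals Arith Lra Lia Classical.
From Coquelicot Require Import Coquelicot.
Open Scope R_scope.

Lemma C_ext (x y : C) : fst x = fst y -> snd x = snd y -> x = y.
Proof. destruct x, y; simpl; intros; subst; reflexivity. Qed.

Lemma Cmult_reg_r (x y : C) : Cmult x y = RtoC 0 -> y <> RtoC 0 -> x = RtoC 0.
Proof.
  intros H hy. replace x with (Cdiv (Cmult x y) y) by (field; exact hy).
  rewrite H. field. exact hy.
Qed.

Lemma Cexpi_add a b : Cmult (Cexpi a) (Cexpi b) = Cexpi (a + b).
Proof. unfold Cexpi, Cmult; simpl. rewrite cos_plus, sin_plus. f_equal; ring. Qed.

Lemma Cconj_Cexpi a : Cconj (Cexpi a) = Cexpi (- a).
Proof. unfold Cexpi, Cconj; simpl. rewrite cos_neg, sin_neg. reflexivity. Qed.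

Lemma Cexpi_period a m : Cexpi (a + 2 * INR m * PI) = Cexpi a.
Proof. unfold Cexpi. rewrite cos_period, sin_period. reflexivity. Qed.

Lemma Cexpi_neq0 a : Cexpi a <> RtoC 0.
Proof.
  intro H. injection H as Hc Hs. pose proof (sin2_cos2 a) as E.
  unfold Rsqr in E. rewrite Hc, Hs in E. lra.
Qed.

Lemma Cexpi_quadratic a :
  Cmult (RtoC (2 * cos a)) (Cexpi a) = Cplus (Cmult (Cexpi a) (Cexpi a)) (RtoC 1).
Proof.
  pose proof (sin2_cos2 a). unfold Rsqr in *.
  unfold Cexpi; apply C_ext; simpl; nra.
Qed.

Lemma cos_sin_sum_sq y :
  Cplus (Cmult (RtoC (cos y)) (RtoC (cos y))) (Cmult (RtoC (sin y)) (RtoC (sin y))) = RtoC 1.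
Proof. pose proof (sin2_cos2 y). unfold Rsqr in *. apply C_ext; simpl; lra. Qed.

Lemma is_derive_linear_comp {U V : NormedModule R_AbsRing} (L : U -> V) (f : R -> U) x l :
  is_linear L -> is_derive f x l -> is_derive (fun y => L (f y)) x (L l).
Proof.
  intros hL Hf. unfold is_derive in *.
  eapply filterdiff_ext_lin.
  - exact (filterdiff_comp' f L x _ L Hf (filterdiff_linear L hL)).
  - intro y. exact (linear_scal L hL y l).
Qed.

Lemma is_derive_C (f : R -> C) x l :
  is_derive f x l <->
  is_derive (fun y => fst (f y)) x (fst l) /\ is_derive (fun y => snd (f y)) x (snd l).
Proof.
  split.
  - intro H. split.
    + exact (is_derive_linear_comp (fun z : C_R_NormedModule => fst z) f x l
               (@is_linear_fst R_AbsRing R_NormedModule R_NormedModule) H).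
    + exact (is_derive_linear_comp (fun z : C_R_NormedModule => snd z) f x l
               (@is_linear_snd R_AbsRing R_NormedModule R_NormedModule) H).
  - intros [H1 H2].
    assert (pair_linear : filterdiff (fun p : R_NormedModule * R_NormedModule => (fst p, snd p) : C)
                            (locally (fst (f x), snd (f x)))
                            (fun p : R_NormedModule * R_NormedModule => (fst p, snd p) : C)).
    { eapply filterdiff_ext_lin; [eapply filterdiff_ext; [|apply filterdiff_id]|];
        intros []; reflexivity. }
    apply (is_derive_ext (fun y => (fst (f y), snd (f y)) : C)); [intro y; now destruct (f y)|].
    destruct l. exact (filterdiff_comp'_2 _ _ _ x _ _ _ H1 H2 pair_linear).
Qed.

Lemma is_derive_C_unique (f : R -> C) x l1 l2 :
  is_derive f x l1 -> is_derive f x l2 -> l1 = l2.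
Proof.
  intros [H1 K1]%is_derive_C [H2 K2]%is_derive_C.
  apply C_ext.
  - exact (eq_trans (eq_sym (is_derive_unique _ _ _ H1)) (is_derive_unique _ _ _ H2)).
  - exact (eq_trans (eq_sym (is_derive_unique _ _ _ K1)) (is_derive_unique _ _ _ K2)).
Qed.

Lemma is_derive_Cmult_l (c : C) (g : R -> C) x l :
  is_derive g x l -> is_derive (fun y => Cmult c (g y)) x (Cmult c l).
Proof.
  intros [H1 H2]%is_derive_C. destruct c as [c1 c2].
  apply is_derive_C; split; simpl.
  - exact (is_derive_minus _ _ _ _ _ (is_derive_scal _ _ c1 _ H1) (is_derive_scal _ _ c2 _ H2)).
  - exact (is_derive_plus _ _ _ _ _ (is_derive_scal _ _ c1 _ H2) (is_derive_scal _ _ c2 _ H1)).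
Qed.

Lemma harmonic_ode_zero (k l : R) (u du ddu : R -> R) :
  k <> 0 ->
  (forall x, is_derive u x (du x)) -> (forall x, is_derive du x (ddu x)) ->
  (forall x, 0 <= x <= l -> ddu x = - (k ^ 2 * u x)) ->
  u 0 = 0 -> du 0 = 0 ->
  forall x, 0 <= x <= l -> u x = 0 /\ du x = 0.
Proof.
  intros hk Hu Hdu Hode u0 du0 x hx.
  (* the energy [du^2 + k^2 u^2] is constant on [0, l] and vanishes at 0 *)
  set (E := fun y => du y ^ 2 + k ^ 2 * u y ^ 2).
  set (dE := fun y => 2 * du y * (ddu y + k ^ 2 * u y)).
  assert (HE : forall y, is_derive E y (dE y)).
  { intro y.
    replace (dE y) with (INR 2 * ddu y * du y ^ 1 + k ^ 2 * (INR 2 * du y * u y ^ 1))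
      by (unfold dE; simpl; ring).
    exact (is_derive_plus _ _ _ _ _ (is_derive_pow _ 2 _ _ (Hdu y))
             (is_derive_scal _ _ _ _ (is_derive_pow _ 2 _ _ (Hu y)))). }
  assert (Ex : E x = 0).
  { destruct (MVT_gen E 0 x dE) as [c [Hc Hmvt]].
    - intros y _. apply HE.
    - intros y _. apply derivable_continuous_pt. eexists. apply is_derive_Reals, HE.
    - rewrite Rmin_left, Rmax_right in Hc by lra.
      unfold dE in Hmvt. rewrite Hode in Hmvt by lra.
      unfold E in *. rewrite u0, du0 in Hmvt. lra. }
  unfold E in Ex.
  assert (0 < k ^ 2) by (apply pow2_gt_0; exact hk).
  pose proof (pow2_ge_0 (du x)). pose proof (pow2_ge_0 (u x)).
  assert (u x ^ 2 = 0) by nra.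
  split; [|assert (du x ^ 2 = 0) by nra]; nra.
Qed.

Lemma harmonic_ode_zero_C (k l : R) (h h' h'' : R -> C) :
  k <> 0 ->
  (forall x, is_derive h x (h' x)) -> (forall x, is_derive h' x (h'' x)) ->
  (forall x, 0 <= x <= l -> Copp (h'' x) = Cmult (RtoC (k ^ 2)) (h x)) ->
  h 0 = RtoC 0 -> h' 0 = RtoC 0 ->
  forall x, 0 <= x <= l -> h x = RtoC 0 /\ h' x = RtoC 0.
Proof.
  intros hk Hh Hh' Hode h0 h'0 x hx.
  pose proof (fun y => proj1 (is_derive_C _ _ _) (Hh y)) as Dh.
  pose proof (fun y => proj1 (is_derive_C _ _ _) (Hh' y)) as Dh'.
  destruct (harmonic_ode_zero k l (fun y => fst (h y)) (fun y => fst (h' y)) (fun y => fst (h'' y))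
              hk (fun y => proj1 (Dh y)) (fun y => proj1 (Dh' y))) with x as [Hre Hre'];
    [| rewrite h0; reflexivity | rewrite h'0; reflexivity | exact hx |].
  { intros y hy. specialize (Hode y hy). apply (f_equal fst) in Hode. simpl in Hode. lra. }
  destruct (harmonic_ode_zero k l (fun y => snd (h y)) (fun y => snd (h' y)) (fun y => snd (h'' y))
              hk (fun y => proj2 (Dh y)) (fun y => proj2 (Dh' y))) with x as [Him Him'];
    [| rewrite h0; reflexivity | rewrite h'0; reflexivity | exact hx |].
  { intros y hy. specialize (Hode y hy). apply (f_equal snd) in Hode. simpl in Hode. lra. }
  split; apply C_ext; assumption.
Qed.

Definition trig_comb (k : R) (A B : C) (x : R) : C :=
  Cplus (Cmult (RtoC (cos (k * x))) A) (Cmult (RtoC (sin (k * x))) B).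

Lemma trig_comb_0 k A B : trig_comb k A B 0 = A.
Proof. unfold trig_comb. rewrite Rmult_0_r, cos_0, sin_0. apply C_ext; simpl; ring. Qed.

Lemma is_derive_trig_comb k A B x :
  is_derive (trig_comb k A B) x (trig_comb k (Cmult (RtoC k) B) (Copp (Cmult (RtoC k) A)) x).
Proof.
  destruct A as [a1 a2], B as [b1 b2].
  apply is_derive_C; unfold trig_comb; simpl; split; auto_derive; auto; ring.
Qed.

Lemma edge_solution (k l : R) (g g' g'' : R -> C) :
  k <> 0 ->
  (forall x, is_derive g x (g' x)) -> (forall x, is_derive g' x (g'' x)) ->
  (forall x, 0 <= x <= l -> Copp (g'' x) = Cmult (RtoC (k ^ 2)) (g x)) ->
  forall x, 0 <= x <= l ->
    g x = trig_comb k (g 0) (Cmult (RtoC (/ k)) (g' 0)) x /\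
    g' x = trig_comb k (g' 0) (Copp (Cmult (RtoC k) (g 0))) x.
Proof.
  intros hk Hg Hg' Hode.
  set (A := g 0). set (B := Cmult (RtoC (/ k)) (g' 0)).
  assert (kB : Cmult (RtoC k) B = g' 0).
  { unfold B. apply C_ext; simpl; field; exact hk. }
  set (sol := trig_comb k A B).
  set (sol' := trig_comb k (Cmult (RtoC k) B) (Copp (Cmult (RtoC k) A))).
  set (sol'' := trig_comb k (Cmult (RtoC k) (Copp (Cmult (RtoC k) A)))
                            (Copp (Cmult (RtoC k) (Cmult (RtoC k) B)))).
  intros x hx.
  destruct (harmonic_ode_zero_C k l (fun y => Cminus (g y) (sol y))
              (fun y => Cminus (g' y) (sol' y)) (fun y => Cminus (g'' y) (sol'' y)) hk)
    with x as [D0 D1]; try exact hx.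
  - intro y. apply (is_derive_minus _ _ _ _ _ (Hg y)). apply is_derive_trig_comb.
  - intro y. apply (is_derive_minus _ _ _ _ _ (Hg' y)). apply is_derive_trig_comb.
  - intros y hy. pose proof (Hode y hy) as E. apply (f_equal fst) in E as E1.
    apply (f_equal snd) in E as E2. unfold sol, sol'', trig_comb.
    apply C_ext; simpl in *; nra.
  - cbv beta. unfold sol. rewrite trig_comb_0. apply C_ext; simpl; unfold A; ring.
  - cbv beta. unfold sol'. rewrite trig_comb_0, kB. apply C_ext; simpl; ring.
  - cbv beta in D0, D1. rewrite <- kB. split.
    + replace (g x) with (Cplus (Cminus (g x) (sol x)) (sol x)) by (apply C_ext; simpl; ring).
      rewrite D0. apply C_ext; simpl; ring.
    + replace (g' x) with (Cplus (Cminus (g' x) (sol' x)) (sol' x)) by (apply C_ext; simpl; ring).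
      rewrite D1. apply C_ext; simpl; ring.
Qed.

Lemma sin_nonzero_near_0 k l : k <> 0 -> 0 < l -> exists x, 0 <= x <= l /\ sin (k * x) <> 0.
Proof.
  intros hk hl.
  assert (hak : 0 < Rabs k) by (apply Rabs_pos_lt; exact hk).
  set (x := Rmin l (/ (2 * Rabs k))).
  assert (hx0 : 0 < x) by (apply Rmin_glb_lt; [lra|apply Rinv_0_lt_compat; lra]).
  assert (hkx : Rabs k * x <= / 2).
  { apply (Rmult_le_reg_l (/ Rabs k)); [apply Rinv_0_lt_compat; lra|].
    replace (/ Rabs k * (Rabs k * x)) with x by (field; lra).
    replace (/ Rabs k * / 2) with (/ (2 * Rabs k)) by (field; lra). apply Rmin_r. }
  pose proof PI2_1.
  exists x. split; [split; [lra|apply Rmin_l]|].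
  assert (pos : 0 < sin (Rabs k * x)) by (apply sin_gt_0; nra).
  destruct (Rle_or_lt 0 k) as [kp|kn].
  - rewrite Rabs_pos_eq in pos by lra. lra.
  - rewrite Rabs_left in pos by lra. rewrite Ropp_mult_distr_l_reverse, sin_neg in pos. lra.
Qed.

Lemma trig_comb_nonzero k l A B :
  k <> 0 -> 0 < l -> A <> RtoC 0 \/ B <> RtoC 0 ->
  exists x, 0 <= x <= l /\ trig_comb k A B x <> RtoC 0.
Proof.
  intros hk hl hAB. destruct (classic (A = RtoC 0)) as [A0|A0].
  - destruct hAB as [|hB]; [contradiction|].
    destruct (sin_nonzero_near_0 k l hk hl) as [x [hx hsin]].
    exists x. split; [exact hx|].
    replace (trig_comb k A B x) with (Cmult (RtoC (sin (k * x))) B)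
      by (unfold trig_comb; rewrite A0; apply C_ext; simpl; ring).
    apply Cmult_neq_0; [intro h; injection h|]; auto.
  - exists 0. split; [lra|]. rewrite trig_comb_0. exact A0.
Qed.

Lemma trig_comb_neq0_coef k A B x : trig_comb k A B x <> RtoC 0 -> A <> RtoC 0 \/ B <> RtoC 0.
Proof.
  intro h. destruct (classic (A = RtoC 0)) as [A0|]; [right|left; assumption].
  intro B0. apply h. unfold trig_comb. rewrite A0, B0. apply C_ext; simpl; ring.
Qed.

Definition root_of_unity (n s : nat) : C := Cexpi (2 * PI * INR s / INR n).

Lemma root_of_unity_quadratic n s :
  Cmult (RtoC (a_coef n s)) (root_of_unity n s)
  = Cplus (Cmult (root_of_unity n s) (root_of_unity n s)) (RtoC 1).
Proof. apply Cexpi_quadratic. Qed.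

Definition phase (n1 n2 s t j1 j2 : nat) : C := Cconj (tau n1 n2 s t j1 j2).

Lemma phase_neq0 n1 n2 s t j1 j2 : phase n1 n2 s t j1 j2 <> RtoC 0.
Proof. unfold phase, tau. rewrite Cconj_Cexpi. apply Cexpi_neq0. Qed.

Lemma phase_0 n1 n2 s t : phase n1 n2 s t 0 0 = RtoC 1.
Proof.
  unfold phase, tau. rewrite Cconj_Cexpi, !Nat.mul_0_r. simpl.
  unfold Cexpi. apply C_ext; simpl;
    rewrite ?Rmult_0_r, ?Rdiv_0_l, ?Rplus_0_r, ?Ropp_0, ?cos_0, ?sin_0; reflexivity.
Qed.

Lemma phase_add_mod (n1 n2 s t kappa iota j1 j2 : nat) :
  (0 < n1)%nat -> (0 < n2)%nat ->
  phase n1 n2 s t ((j1 + kappa) mod n1) ((j2 + iota) mod n2)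
  = Cmult (phase n1 n2 s t kappa iota) (phase n1 n2 s t j1 j2).
Proof.
  intros h1 h2. unfold phase, tau. rewrite !Cconj_Cexpi, Cexpi_add.
  pose proof (Nat.div_mod_eq (j1 + kappa) n1) as E1.
  pose proof (Nat.div_mod_eq (j2 + iota) n2) as E2.
  set (q1 := ((j1 + kappa) / n1)%nat) in *. set (r1 := ((j1 + kappa) mod n1)%nat) in *.
  set (q2 := ((j2 + iota) / n2)%nat) in *. set (r2 := ((j2 + iota) mod n2)%nat) in *.
  apply (f_equal INR) in E1, E2. rewrite !plus_INR, mult_INR in E1, E2.
  assert (INR n1 <> 0) by (apply not_0_INR; lia).
  assert (INR n2 <> 0) by (apply not_0_INR; lia).
  (* the quotients [q1], [q2] only add full turns to the angle *)
  symmetry. rewrite <- (Cexpi_period _ (s * q1 + t * q2)). f_equal.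
  rewrite !mult_INR, plus_INR, !mult_INR.
  replace (INR r1) with (INR j1 + INR kappa - INR n1 * INR q1) by lra.
  replace (INR r2) with (INR j2 + INR iota - INR n2 * INR q2) by lra.
  field. auto.
Qed.

Lemma phase_prev_l n1 n2 s t j1 j2 :
  (0 < n1)%nat -> (0 < n2)%nat -> (j2 < n2)%nat ->
  phase n1 n2 s t (prev n1 j1) j2
  = Cmult (root_of_unity n1 s) (phase n1 n2 s t j1 j2).
Proof.
  intros h1 h2 hj2.
  transitivity (phase n1 n2 s t ((j1 + (n1 - 1)) mod n1) ((j2 + 0) mod n2)).
  { unfold prev. rewrite Nat.add_0_r, (Nat.mod_small j2) by exact hj2. do 2 f_equal. lia. }
  rewrite phase_add_mod by assumption. f_equal.
  unfold phase, tau, root_of_unity. rewrite Cconj_Cexpi, <- (Cexpi_period _ s). f_equal.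
  assert (INR n1 <> 0) by (apply not_0_INR; lia).
  assert (INR n2 <> 0) by (apply not_0_INR; lia).
  rewrite !mult_INR, minus_INR by lia. simpl. field. auto.
Qed.

Lemma phase_prev_r n1 n2 s t j1 j2 :
  (0 < n1)%nat -> (0 < n2)%nat -> (j1 < n1)%nat ->
  phase n1 n2 s t j1 (prev n2 j2)
  = Cmult (root_of_unity n2 t) (phase n1 n2 s t j1 j2).
Proof.
  intros h1 h2 hj1.
  transitivity (phase n1 n2 s t ((j1 + 0) mod n1) ((j2 + (n2 - 1)) mod n2)).
  { unfold prev. rewrite Nat.add_0_r, (Nat.mod_small j1) by exact hj1. do 2 f_equal. lia. }
  rewrite phase_add_mod by assumption. f_equal.
  unfold phase, tau, root_of_unity. rewrite Cconj_Cexpi, <- (Cexpi_period _ t). f_equal.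
  assert (INR n1 <> 0) by (apply not_0_INR; lia).
  assert (INR n2 <> 0) by (apply not_0_INR; lia).
  rewrite !mult_INR, minus_INR by lia. simpl. field. auto.
Qed.

Lemma prev_lt n j : (0 < n)%nat -> (prev n j < n)%nat.
Proof. intro hn. apply Nat.mod_upper_bound. lia. Qed.

Lemma phase_prev_0_l n1 n2 s t :
  (0 < n1)%nat -> (0 < n2)%nat -> phase n1 n2 s t (prev n1 0) 0 = root_of_unity n1 s.
Proof.
  intros h1 h2. rewrite phase_prev_l, phase_0 by lia. apply Cmult_1_r.
Qed.

Lemma phase_prev_0_r n1 n2 s t :
  (0 < n1)%nat -> (0 < n2)%nat -> phase n1 n2 s t 0 (prev n2 0) = root_of_unity n2 t.
Proof.
  intros h1 h2. rewrite phase_prev_r, phase_0 by lia. apply Cmult_1_r.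
Qed.

Lemma in_F_orbit {n1 n2 s t f d j1 j2 x} :
  in_F n1 n2 s t f -> (j1 < n1)%nat -> (j2 < n2)%nat ->
  f d j1 j2 x = Cmult (phase n1 n2 s t j1 j2) (f d 0%nat 0%nat x).
Proof.
  intros HF hj1 hj2. pose proof (HF j1 j2 d 0%nat 0%nat x hj1 hj2 ltac:(lia) ltac:(lia)) as H.
  rewrite !Nat.add_0_l, !Nat.mod_small in H by assumption. exact H.
Qed.

Lemma in_F_orbit_derive {n1 n2 l1 l2 lam s t f f' f'' d j1 j2 x} :
  edge_eigen n1 n2 l1 l2 lam f f' f'' -> in_F n1 n2 s t f -> (j1 < n1)%nat -> (j2 < n2)%nat ->
  f' d j1 j2 x = Cmult (phase n1 n2 s t j1 j2) (f' d 0%nat 0%nat x).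
Proof.
  intros Hee HF hj1 hj2.
  apply (is_derive_C_unique (f d j1 j2) x); [exact (proj1 (Hee d j1 j2 hj1 hj2) x)|].
  apply (is_derive_ext (fun y => Cmult (phase n1 n2 s t j1 j2) (f d 0%nat 0%nat y))).
  - intro y. symmetry. exact (in_F_orbit HF hj1 hj2).
  - apply is_derive_Cmult_l. exact (proj1 (Hee d 0%nat 0%nat ltac:(lia) ltac:(lia)) x).
Qed.

Section VertexSystem.

Local Open Scope C_scope.

(* [P] is a double root of [X^2 - a X + 1] once [a = 2 c] with [c^2 = 1], so [P = c]. *)
Lemma double_root_inv (P a c : C) : a * P = P * P + 1 -> c * c = 1 -> a = 2 * c -> P * c = 1.
Proof.
  intros hP hc ha.
  assert (sq : (P * c - 1) * (P * c - 1) = 0).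
  { transitivity (P * P * (c * c) - a * P + 1).
    - rewrite ha. ring.
    - rewrite hc, hP. ring. }
  assert (P * c - 1 = 0) as E.
  { destruct (classic (P * c - 1 = 0)) as [|hne]; [assumption|exact (Cmult_reg_r _ _ sq hne)]. }
  transitivity (P * c - 1 + 1); [ring|rewrite E; ring].
Qed.

Variables (P Q a b c1 s1 c2 s2 : C).
Hypotheses (hP : a * P = P * P + 1) (hQ : b * Q = Q * Q + 1)
  (hcs1 : c1 * c1 + s1 * s1 = 1) (hcs2 : c2 * c2 + s2 * s2 = 1)
  (P0 : P <> 0) (Q0 : Q <> 0).

(* Continuity at (0,0) along the two incoming edges, and Kirchhoff's law divided by [k],
   for the edge functions [A cos + B sin] (horizontal) and [A cos + D sin] (vertical). *)
Definition vertex_system (A B D : C) : Prop :=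
  P * (c1 * A + s1 * B) = A /\ Q * (c2 * A + s2 * D) = A /\
  B - P * (c1 * B - s1 * A) + D - Q * (c2 * D - s2 * A) = 0.

Definition secular : C := 2 * (s1 * c2 + c1 * s2) - a * s2 - b * s1.

Let det : C :=
  (P * c1 - 1) * (P * c1 - 1) * (Q * s2) + P * s1 * (Q * s2) * (P * s1 + Q * s2)
  + P * s1 * (Q * c2 - 1) * (Q * c2 - 1).

Lemma det_secular : det = - (P * Q) * secular.
Proof.
  transitivity (- (P * Q) * secular
    + Q * s2 * ((P * P + 1 - a * P) + P * P * (c1 * c1 + s1 * s1 - 1))
    + P * s1 * ((Q * Q + 1 - b * Q) + Q * Q * (c2 * c2 + s2 * s2 - 1))).
  - unfold det, secular. ring.
  - rewrite hP, hQ, hcs1, hcs2. ring.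
Qed.

Lemma vertex_system_det A B D :
  vertex_system A B D -> det * A = 0 /\ det * B = 0 /\ det * D = 0.
Proof.
  intros [E1 [E2 E3]].
  set (m11 := P * c1 - 1). set (m12 := P * s1). set (m21 := Q * c2 - 1). set (m23 := Q * s2).
  set (m31 := P * s1 + Q * s2).
  assert (R1 : m11 * A + m12 * B = 0).
  { transitivity (P * (c1 * A + s1 * B) - A); [unfold m11, m12; ring|rewrite E1; ring]. }
  assert (R2 : m21 * A + m23 * D = 0).
  { transitivity (Q * (c2 * A + s2 * D) - A); [unfold m21, m23; ring|rewrite E2; ring]. }
  assert (R3 : m31 * A - m11 * B - m21 * D = 0) by (rewrite <- E3; unfold m11, m21, m31; ring).
  (* Cramer: the rows of the adjugate applied to the three equations *)
  split; [|split].
  - transitivity (m23 * m11 * (m11 * A + m12 * B) + m12 * m21 * (m21 * A + m23 * D)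
                  + m12 * m23 * (m31 * A - m11 * B - m21 * D)).
    { unfold det, m11, m12, m21, m23, m31. ring. }
    rewrite R1, R2, R3. ring.
  - transitivity ((m23 * m31 + m21 * m21) * (m11 * A + m12 * B) - m11 * m21 * (m21 * A + m23 * D)
                  - m11 * m23 * (m31 * A - m11 * B - m21 * D)).
    { unfold det, m11, m12, m21, m23, m31. ring. }
    rewrite R1, R2, R3. ring.
  - transitivity (- m21 * m11 * (m11 * A + m12 * B) + (m12 * m31 + m11 * m11) * (m21 * A + m23 * D)
                  - m12 * m21 * (m31 * A - m11 * B - m21 * D)).
    { unfold det, m11, m12, m21, m23, m31. ring. }
    rewrite R1, R2, R3. ring.
Qed.

Lemma vertex_system_secular A B D :
  vertex_system A B D -> (A <> 0 \/ B <> 0 \/ D <> 0) -> secular = 0.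
Proof.
  intros HS nz.
  assert (det0 : det = 0).
  { destruct (vertex_system_det A B D HS) as [dA [dB dD]].
    destruct nz as [h|[h|h]];
      [exact (Cmult_reg_r _ _ dA h)|exact (Cmult_reg_r _ _ dB h)|exact (Cmult_reg_r _ _ dD h)]. }
  apply (Cmult_reg_r _ (- (P * Q))).
  - rewrite Cmult_comm, <- det_secular. exact det0.
  - intro h. apply (Cmult_neq_0 P Q P0 Q0). transitivity (- - (P * Q)); [ring|rewrite h; ring].
Qed.

Lemma secular_vertex_system :
  secular = 0 -> exists A B D, vertex_system A B D /\ (A <> 0 \/ B <> 0 \/ D <> 0).
Proof.
  intro hsec. unfold vertex_system.
  destruct (classic (s1 = 0)) as [s10|s10].
  - destruct (classic (P * c1 = 1)) as [Pc1|Pc1].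
    + exists 0, 1, 0. rewrite s10. split; [|right; left; apply C1_nz].
      split; [ring|split; [ring|]]. transitivity (1 - P * c1); [ring|rewrite Pc1; ring].
    + assert (s20 : s2 = 0).
      { apply NNPP. intro s20. apply Pc1, (double_root_inv P a c1 hP).
        - rewrite <- hcs1, s10. ring.
        - assert (e : (2 * c1 - a) * s2 = 0)
            by (rewrite <- hsec; unfold secular; rewrite s10; ring).
          transitivity (a + (2 * c1 - a)); [|ring].
          rewrite (Cmult_reg_r _ _ e s20). ring. }
      exists 0, (1 - Q * c2), (P * c1 - 1). rewrite s10, s20.
      split; [split; [ring|split; ring]|].
      right; right. intro h. apply Pc1. transitivity (P * c1 - 1 + 1); [ring|rewrite h; ring].
  - destruct (classic (s2 = 0)) as [s20|s20].
    + exists 0, 0, 1. rewrite s20. split; [|right; right; apply C1_nz].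
      assert (Qc2 : Q * c2 = 1).
      { apply (double_root_inv Q b c2 hQ).
        - rewrite <- hcs2, s20. ring.
        - assert (e : (2 * c2 - b) * s1 = 0)
            by (rewrite <- hsec; unfold secular; rewrite s20; ring).
          transitivity (b + (2 * c2 - b)); [|ring].
          rewrite (Cmult_reg_r _ _ e s10). ring. }
      split; [ring|split; [ring|]]. transitivity (1 - Q * c2); [ring|rewrite Qc2; ring].
  - (* generic case: normalise [A = 1] and solve the first two equations for [B] and [D] *)
    exists 1, ((1 - P * c1) / (P * s1)), ((1 - Q * c2) / (Q * s2)).
    split; [|left; apply C1_nz]. split; [|split].
    + field. auto.
    + field. auto.
    + (* multiplied by [P s1 Q s2], the third equation becomes the determinant *)
      apply (Cmult_reg_r _ (P * s1 * (Q * s2))).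
      * transitivity det; [unfold det; field; auto|].
        rewrite det_secular, hsec. ring.
      * repeat apply Cmult_neq_0; assumption.
Qed.

End VertexSystem.

Lemma Sigma_secular n1 n2 l1 l2 s t k :
  Sigma n1 n2 l1 l2 s t k =
  Cmult (secular (RtoC (a_coef n1 s)) (RtoC (a_coef n2 t))
           (RtoC (cos (k * l1))) (RtoC (sin (k * l1))) (RtoC (cos (k * l2))) (RtoC (sin (k * l2))))
        (Cmult (0, -1) (Cexpi (k * (l1 + l2)))).
Proof.
  set (x := k * l1). set (y := k * l2). set (u := k * (l1 + l2)).
  assert (secular_sin : secular (RtoC (a_coef n1 s)) (RtoC (a_coef n2 t))
            (RtoC (cos x)) (RtoC (sin x)) (RtoC (cos y)) (RtoC (sin y))
          = RtoC (2 * sin u - a_coef n1 s * sin y - a_coef n2 t * sin x)).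
  { replace u with (x + y) by (unfold x, y, u; ring). rewrite sin_plus.
    unfold secular. apply C_ext; simpl; ring. }
  rewrite secular_sin. unfold Sigma. generalize (a_coef n1 s) (a_coef n2 t). intros a b.
  (* write every angle relative to [u], so that only [u]'s Pythagorean identity is needed *)
  replace (k * l1) with (u - y) by (unfold x, y, u; ring).
  replace (k * l2) with (u - x) by (unfold x, y, u; ring).
  replace (k * (l1 + 2 * l2)) with (u + y) by (unfold x, y, u; ring).
  replace (k * (2 * l1 + l2)) with (u + x) by (unfold x, y, u; ring).
  replace (2 * k * (l1 + l2)) with (2 * u) by (unfold u; ring).
  unfold Cexpi. rewrite !cos_minus, !sin_minus, !cos_plus, !sin_plus, cos_2a, sin_2a.
  pose proof (sin2_cos2 u). unfold Rsqr in *.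
  apply C_ext; simpl; nra.
Qed.

Section Graph.

Variables (n1 n2 : nat) (l1 l2 : R) (s t : nat) (k : R).
Hypotheses (hn1 : (0 < n1)%nat) (hn2 : (0 < n2)%nat) (hl1 : 0 < l1) (hl2 : 0 < l2) (hk : k <> 0).

Let system := vertex_system (root_of_unity n1 s) (root_of_unity n2 t)
  (RtoC (cos (k * l1))) (RtoC (sin (k * l1))) (RtoC (cos (k * l2))) (RtoC (sin (k * l2))).

Local Open Scope C_scope.

Lemma eigenfunction_vertex_system :
  is_eigenvalue_Hst n1 n2 l1 l2 s t (k ^ 2) ->
  exists A B D, system A B D /\ (A <> 0 \/ B <> 0 \/ D <> 0).
Proof.
  intros [f [f' [f'' [Hee [Hsc [HF Hnz]]]]]].
  destruct (Hee true 0%nat 0%nat hn1 hn2) as [Dh [Dh' Oh]].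
  destruct (Hee false 0%nat 0%nat hn1 hn2) as [Dv [Dv' Ov]].
  set (A := f true 0%nat 0%nat 0%R).
  set (B := RtoC (/ k) * f' true 0%nat 0%nat 0%R).
  set (D := RtoC (/ k) * f' false 0%nat 0%nat 0%R).
  assert (kB : f' true 0%nat 0%nat 0%R = RtoC k * B)
    by (unfold B; apply C_ext; simpl; field; exact hk).
  assert (kD : f' false 0%nat 0%nat 0%R = RtoC k * D)
    by (unfold D; apply C_ext; simpl; field; exact hk).
  destruct (Hsc 0%nat 0%nat hn1 hn2) as [Ch [Cv_A [Cv Kir]]].
  fold A in Ch, Cv_A, Cv.
  rewrite (in_F_orbit HF (prev_lt n1 0 hn1) hn2), phase_prev_0_l in Ch by lia.
  rewrite (in_F_orbit HF hn1 (prev_lt n2 0 hn2)), phase_prev_0_r in Cv by lia.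
  rewrite (in_F_orbit_derive Hee HF (prev_lt n1 0 hn1) hn2),
          (in_F_orbit_derive Hee HF hn1 (prev_lt n2 0 hn2)),
          phase_prev_0_l, phase_prev_0_r in Kir by lia.
  pose proof (edge_solution k l1 _ _ _ hk Dh Dh' Oh) as Sh.
  pose proof (edge_solution k l2 _ _ _ hk Dv Dv' Ov) as Sv.
  rewrite Cv_A in Sv. fold A B in Sh. fold D in Sv. rewrite kB in Sh. rewrite kD in Sv.
  destruct (Sh l1 ltac:(lra)) as [Sh_l1 Sh'_l1].
  destruct (Sv l2 ltac:(lra)) as [Sv_l2 Sv'_l2].
  exists A, B, D. split; [split; [|split]|].
  - rewrite Sh_l1 in Ch. exact Ch.
  - rewrite Sv_l2 in Cv. exact Cv.
  - (* Kirchhoff's law is [k] times the third equation *)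
    apply (Cmult_reg_r _ (RtoC k)); [|intro h; injection h; auto].
    rewrite <- Kir, Sh'_l1, Sv'_l2, kB, kD. unfold trig_comb. ring.
  - destruct Hnz as [d [j1 [j2 [x [hj1 [hj2 [hx hfx]]]]]]].
    rewrite (in_F_orbit HF hj1 hj2) in hfx.
    assert (hf0 : f d 0%nat 0%nat x <> 0) by (intro h; apply hfx; rewrite h; ring).
    destruct d; simpl in hx; [rewrite (proj1 (Sh x hx)) in hf0 | rewrite (proj1 (Sv x hx)) in hf0];
      apply trig_comb_neq0_coef in hf0; tauto.
Qed.

Lemma vertex_system_eigenfunction A B D :
  system A B D -> (A <> 0 \/ B <> 0 \/ D <> 0) -> is_eigenvalue_Hst n1 n2 l1 l2 s t (k ^ 2).
Proof.
  intros [E1 [E2 E3]] nz.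
  set (ph := phase n1 n2 s t).
  set (coef := fun d : bool => if d then B else D).
  exists (fun d j1 j2 x => ph j1 j2 * trig_comb k A (coef d) x),
         (fun d j1 j2 x => ph j1 j2 * trig_comb k (RtoC k * coef d) (- (RtoC k * A)) x),
         (fun d j1 j2 x => ph j1 j2 * trig_comb k (RtoC k * - (RtoC k * A))
                                                  (- (RtoC k * (RtoC k * coef d))) x).
  split; [|split; [|split]].
  - intros d j1 j2 _ _. split; [|split].
    + intro x. apply is_derive_Cmult_l, is_derive_trig_comb.
    + intro x. apply is_derive_Cmult_l, is_derive_trig_comb.
    + intros x _. replace (RtoC (k ^ 2)) with (RtoC k * RtoC k) by (apply C_ext; simpl; ring).
      unfold trig_comb. ring.
  - intros j1 j2 hj1 hj2. cbv beta.
    unfold ph. rewrite phase_prev_l, phase_prev_r, !trig_comb_0 by assumption. fold ph.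
    split; [|split; [|split]].
    + rewrite <- E1 at 2. unfold trig_comb, coef; cbv beta iota. ring.
    + reflexivity.
    + rewrite <- E2 at 2. unfold trig_comb, coef; cbv beta iota. ring.
    + transitivity (ph j1 j2 * RtoC k *
        (B - root_of_unity n1 s * (RtoC (cos (k * l1)) * B - RtoC (sin (k * l1)) * A)
         + D - root_of_unity n2 t * (RtoC (cos (k * l2)) * D - RtoC (sin (k * l2)) * A))).
      * unfold trig_comb, coef; cbv beta iota. ring.
      * rewrite E3. ring.
  - intros kappa iota d j1 j2 x hk1 hi1 hj1 hj2. unfold ph.
    rewrite phase_add_mod by lia. unfold phase. ring.
  - assert (edge : exists d, exists x, 0 <= x <= edge_len l1 l2 d /\ trig_comb k A (coef d) x <> 0).
    { destruct nz as [h|[h|h]].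
      - exists true. apply trig_comb_nonzero; auto.
      - exists true. apply trig_comb_nonzero; auto.
      - exists false. apply trig_comb_nonzero; auto. }
    destruct edge as [d [x [hx hne]]].
    exists d, 0%nat, 0%nat, x. repeat split; try lia; try apply hx.
    apply Cmult_neq_0; [apply phase_neq0|exact hne].
Qed.

End Graph.

Theorem mainTheorem4 (n1 n2 : nat) (l1 l2 : R) (s t : nat) (k : R)
  (hn1 : (3 <= n1)%nat) (hn2 : (3 <= n2)%nat)
  (hl1 : 0 < l1) (hl2 : 0 < l2)
  (hs : (s < n1)%nat) (ht : (t < n2)%nat)
  (hk : k <> 0) :
  is_eigenvalue_Hst n1 n2 l1 l2 s t (k ^ 2) <-> Sigma n1 n2 l1 l2 s t k = RtoC 0.
Proof.
  assert (hP := root_of_unity_quadratic n1 s). assert (hQ := root_of_unity_quadratic n2 t).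
  assert (hcs1 := cos_sin_sum_sq (k * l1)). assert (hcs2 := cos_sin_sum_sq (k * l2)).
  assert (P0 : root_of_unity n1 s <> RtoC 0) by apply Cexpi_neq0.
  assert (Q0 : root_of_unity n2 t <> RtoC 0) by apply Cexpi_neq0.
  rewrite Sigma_secular. split.
  - intro Heig.
    destruct (eigenfunction_vertex_system n1 n2 l1 l2 s t k ltac:(lia) ltac:(lia) hl1 hl2 hk Heig)
      as [A [B [D [HS nz]]]].
    rewrite (vertex_system_secular _ _ _ _ _ _ _ _ hP hQ hcs1 hcs2 P0 Q0 A B D HS nz).
    apply Cmult_0_l.
  - intro Hsigma.
    assert (w0 : Cmult (0, -1) (Cexpi (k * (l1 + l2))) <> RtoC 0).
    { apply Cmult_neq_0; [intro h; injection h; lra|apply Cexpi_neq0]. }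
    destruct (secular_vertex_system _ _ _ _ _ _ _ _ hP hQ hcs1 hcs2 P0 Q0
                (Cmult_reg_r _ _ Hsigma w0))
      as [A [B [D [HS nz]]]].
    exact (vertex_system_eigenfunction n1 n2 l1 l2 s t k ltac:(lia) ltac:(lia) hl1 hl2 hk
             A B D HS nz).
Qed.
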